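(* Let $I$ be an ideal of a commutative ring $A$ and let $b\in A$ be such that $b^n\in I^n$ for all sufficiently large positive integers $n$. Then $b\in{}^*I$.
   Context: For an ideal $I$ of $A$, an element $b\in A$ is weakly subintegral over $I$ if there exist $q\in\mathbb{N}$ and elements $a_i\in I^i$ ($1\le i\le 2q+1$) such that $b^n+\sum_{i=1}^n\binom{n}{i}a_ib^{n-i}=0$ for all $n$ with $q+1\le n\le 2q+1$. The weak subintegral closure ${}^*I$ of $I$ is the set of elements of $A$ weakly subintegral over $I$. *)

From mathcomp Require Import all_boot all_algebra.
Set Implicit Arguments. Unset Strict Implicit. Unset Printing Implicit Defensive.
Import GRing.Theory.
Local Open Scope ring_scope.

Definition is_ideal (A : comPzRingType) (I : A -> Prop) : Prop :=
  [/\ I 0,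
      (forall x y, I x -> I y -> I (x + y)) &
      (forall r x, I x -> I (r * x))].

(* x belongs to the ideal power I^n: the ideal generated by all products of
   n elements of I, i.e. x is an A-linear combination of such products.
   (For n = 0 this is the whole ring A.) *)
Definition ideal_pow (A : comPzRingType) (I : A -> Prop) (n : nat) (x : A) : Prop :=
  exists (m : nat) (c : 'I_m -> A) (f : 'I_m -> 'I_n -> A),
    (forall i j, I (f i j)) /\ x = \sum_(i < m) c i * \prod_(j < n) f i j.

Definition weakly_subintegral (A : comPzRingType) (I : A -> Prop) (b : A) : Prop :=
  exists (q : nat) (a : nat -> A),
    (forall i, (1 <= i <= 2 * q + 1)%N -> ideal_pow I i (a i)) /\
    (forall n, (q + 1 <= n <= 2 * q + 1)%N ->
       b ^+ n + \sum_(1 <= i < n.+1) 'C(n, i)%:R * a i * b ^+ (n - i) = 0).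

Definition weak_subintegral_closure (A : comPzRingType) (I : A -> Prop) : A -> Prop :=
  fun b => weakly_subintegral I b.

From mathcomp Require Import all_boot all_algebra zify.
Set Implicit Arguments. Unset Strict Implicit. Unset Printing Implicit Defensive.
Local Open Scope ring_scope.
Import GRing.Theory.

(* Let s be the indicator of [0, q] and put a_i := (Δ^i s)(0) b^i, Δ the forward
   difference. Newton's forward-difference formula s(n) = Σ_i C(n,i) (Δ^i s)(0) gives
   b^n + Σ_{i>=1} C(n,i) a_i b^(n-i) = s(n) b^n, which vanishes for n > q. Since s is
   constant on [0, q], (Δ^i s)(0) = 0 for 1 <= i <= q, so a_i = 0 lies in I^i there,
   while for i >= q the hypothesis gives a_i ∈ I^i. *)

Section ForwardDifference.
Variable V : zmodType.
Implicit Type s : nat -> V.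

Definition fdiff s : nat -> V := fun k => s k.+1 - s k.

Lemma iter_fdiff_shift i s j :
  iter i fdiff (fun k => s k.+1) j = iter i fdiff s j.+1.
Proof. by elim: i j => [|i IHi] j //=; rewrite /fdiff !IHi. Qed.

Lemma newton_forward s n :
  \sum_(i < n.+1) iter i fdiff s 0 *+ 'C(n, i) = s n.
Proof.
elim: n s => [|n IHn] s; first by rewrite big_ord_recl big_ord0 addr0.
have shiftE i : iter i fdiff (fun k => s k.+1) 0 =
    iter i fdiff s 0 + iter i.+1 fdiff s 0.
  by rewrite iter_fdiff_shift /= /fdiff addrC subrK.
rewrite -[s n.+1]/((fun k => s k.+1) n) -IHn.
under [RHS]eq_bigr do rewrite shiftE mulrnDl.
rewrite big_split /= big_ord_recl [X in _ = X + _]big_ord_recl /= !bin0 -addrA.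
congr (_ + _).
under eq_bigr do rewrite binS mulrnDr.
rewrite big_split /=; congr (_ + _).
by rewrite big_ord_recr /= bin_small // mulr0n addr0.
Qed.

Lemma iter_fdiff_cst_on s c i j :
  (forall k, (j <= k <= i + j)%N -> s k = c) ->
  iter i fdiff s j = if i == 0%N then c else 0.
Proof.
elim: i j => [|i IHi] j s_cst /=; first by rewrite s_cst ?leqnn.
by rewrite /fdiff !IHi ?subrr // => k ?; apply: s_cst; lia.
Qed.

End ForwardDifference.

Arguments fdiff {V} s k.

Lemma binomial_fdiff_sum (R : comPzRingType) (s : nat -> R) (b : R) n :
  s 0%N = 1 ->
  b ^+ n + \sum_(1 <= i < n.+1) 'C(n, i)%:R * (iter i fdiff s 0 * b ^+ i) * b ^+ (n - i)
  = s n * b ^+ n.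
Proof.
move=> s0; rewrite -(newton_forward s n) mulr_suml big_ord_recl /= s0 bin0 mul1r.
congr (_ + _); rewrite big_add1 big_mkord; apply: eq_bigr => i _.
by rewrite mulrA -mulrA -exprD subnKC // mulr_natl.
Qed.

Section IdealPower.
Variables (A : comPzRingType) (I : A -> Prop).

Lemma ideal_pow0 n : ideal_pow I n 0.
Proof. by exists 0%N, (fun _ => 0), (fun _ _ => 0); rewrite big_ord0; split=> [[]|]. Qed.

Lemma ideal_powMl n r x : ideal_pow I n x -> ideal_pow I n (r * x).
Proof.
move=> [m [c [f [f_in ->]]]]; exists m, (fun i => r * c i), f; split=> //.
by rewrite mulr_sumr; apply: eq_bigr => i _; rewrite mulrA.
Qed.

End IdealPower.

Theorem mainTheorem10 (A : comPzRingType) (I : A -> Prop) (b : A) :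
  is_ideal I ->
  (exists N : nat, forall n : nat, (N <= n)%N -> (0 < n)%N -> ideal_pow I n (b ^+ n)) ->
  weak_subintegral_closure I b.
Proof.
(* [ideal_pow I n] is a generated ideal for any I. *)
move=> _ [q pow_in].
pose s k : A := (k <= q)%:R.
exists q, (fun i => iter i fdiff s 0 * b ^+ i); split.
  move=> i /andP[i_gt0 _]; have [le_qi | lt_iq] := leqP q i.
    exact/ideal_powMl/pow_in.
  rewrite (@iter_fdiff_cst_on _ s 1) => [|k /andP[_ le_k]]; last first.
    by rewrite /s (leq_trans le_k) // addn0 ltnW.
  by rewrite gtn_eqF // mul0r; exact: ideal_pow0.
move=> n /andP[lt_qn _]; rewrite binomial_fdiff_sum //.
by rewrite /s leqNgt -addn1 lt_qn mul0r.
Qed.
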